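(* Let $N$ be a set of $n$ elements and $v:2^N\to\mathbb{R}_+$ a function with $v(\emptyset)=0$. Consider the randomized procedure: pick a size $k\in\{1,\dots,n\}$ with probability $(k\cdot H_n)^{-1}$, where $H_n=\sum_{j=1}^n\frac1j$, and then pick a uniformly random set $S\subseteq N$ of size $k$. Then $$\mathbb{E}\Big[\sum_{i\in S}v(\{i\}\mid S\setminus\{i\})\Big]=\frac{1}{H_n}v(N).$$
   Context: Marginal value: $v(\{i\}\mid T)=v(T\cup\{i\})-v(T)$. *)

From mathcomp Require Import all_boot all_order all_algebra.
Set Implicit Arguments. Unset Strict Implicit. Unset Printing Implicit Defensive.
Import Order.TTheory GRing.Theory Num.Theory.
Local Open Scope ring_scope.

Definition marginal (R : numDomainType) (T : finType) (v : {set T} -> R)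
  (A B : {set T}) : R := v (B :|: A) - v B.

Definition harmonic (R : numFieldType) (n : nat) : R :=
  \sum_(1 <= j < n.+1) (j%:R)^-1.

Definition exp_random_size (R : numFieldType) (T : finType)
  (X : {set T} -> R) : R :=
  \sum_(1 <= k < #|T|.+1)
    ((k%:R * harmonic R #|T|)^-1 *
     (('C(#|T|, k))%:R^-1 * \sum_(S : {set T} | #|S| == k) X S)).

From mathcomp Require Import all_boot all_order all_algebra.
From mathcomp Require Import ring.
Import Order.TTheory GRing.Theory Num.Theory.
Local Open Scope ring_scope.

(** Write [A_k] for the sum of [v] over the [k]-subsets of [N] and
   [a_k = A_k / C(n, k)] for its average.  Summing the marginal values
   [v(S) - v(S \ i)] over all [k]-sets [S] and [i in S] gives
   [k A_k - (n - k + 1) A_(k-1)]; dividing by [k C(n, k)] and using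
   [k C(n, k) = (n - k + 1) C(n, k - 1)] leaves exactly [a_k - a_(k-1)].  So the
   expectation is [H_n^-1] times the telescoping sum [a_n - a_0 = v(N) - v(∅)]. *)

Section CardSums.
Variable T : finType.

(* Removing one point from a [k.+1]-set lands on every [k]-set [U] once for
   each of the [#|T| - k] points outside [U]. *)
Lemma sum_card_setD1 (V : zmodType) (f : {set T} -> V) (k : nat) :
  \sum_(S : {set T} | #|S| == k.+1) \sum_(i in S) f (S :\ i)
  = (\sum_(U : {set T} | #|U| == k) f U) *+ (#|T| - k).
Proof.
rewrite (exchange_big_dep predT) //=.
transitivity (\sum_i \sum_(U : {set T} | (#|U| == k) && (i \notin U)) f U).
  apply: eq_bigr => i _.
  rewrite (reindex_onto (fun U => i |: U) (fun S => S :\ i)); last first.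
    by move=> S /andP[_ iS]; rewrite setD1K.
  apply: eq_big => [U|U /andP[_ /eqP ->] //].
  case: (boolP (i \in U)) => iU /=.
    rewrite setU11 andbT andbF; apply/negbTE/negP => /andP[_ /eqP UE].
    by move: iU; rewrite -UE setD11.
  by rewrite !andbT setU1K // eqxx andbT cardsU1 iU setU11 andbT.
rewrite (exchange_big_dep (fun U : {set T} => #|U| == k)) /=; last first.
  by move=> i U _ /andP[].
rewrite -[RHS]sumrMnl; apply: eq_bigr => U /eqP cardU.
rewrite (eq_bigl (fun i => i \in ~: U)) => [|i]; last by rewrite in_setC cardU eqxx.
by rewrite sumr_const -(cardsC U) cardU addKn.
Qed.

End CardSums.

Section AverageByCard.
Variables (R : numFieldType) (T : finType).

Definition mean_card (v : {set T} -> R) (k : nat) : R :=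
  ('C(#|T|, k)%:R)^-1 * \sum_(S : {set T} | #|S| == k) v S.

Lemma mean_card0 (v : {set T} -> R) : mean_card v 0 = v set0.
Proof.
rewrite /mean_card bin0 invr1 mul1r (big_pred1 set0) // => S.
by rewrite /= cards_eq0.
Qed.

Lemma mean_card_setT (v : {set T} -> R) : mean_card v #|T| = v [set: T].
Proof.
rewrite /mean_card binn invr1 mul1r (big_pred1 [set: T]) // => S /=.
by rewrite eqEcard subsetT cardsT eqn_leq max_card.
Qed.

Lemma sum_card_marginal (v : {set T} -> R) (k : nat) :
  \sum_(S : {set T} | #|S| == k.+1) \sum_(i in S) marginal v [set i] (S :\ i)
  = k.+1%:R * \sum_(S : {set T} | #|S| == k.+1) v S
    - (#|T| - k)%:R * \sum_(S : {set T} | #|S| == k) v S.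
Proof.
rewrite [(#|T| - k)%:R * _]mulr_natl -sum_card_setD1 mulr_sumr -sumrB.
apply: eq_bigr => S /eqP cardS; rewrite /marginal sumrB.
rewrite (eq_bigr (fun=> v S)) => [|i iS]; last by rewrite setUC setD1K.
by rewrite sumr_const cardS mulr_natl.
Qed.

Lemma mean_card_marginal (v : {set T} -> R) (k : nat) : (k < #|T|)%N ->
  (k.+1%:R)^-1 * (('C(#|T|, k.+1)%:R)^-1 *
    \sum_(S : {set T} | #|S| == k.+1) \sum_(i in S) marginal v [set i] (S :\ i))
  = mean_card v k.+1 - mean_card v k.
Proof.
move=> ltkT; rewrite sum_card_marginal /mean_card.
have binS : k.+1%:R * 'C(#|T|, k.+1)%:R = (#|T| - k)%:R * 'C(#|T|, k)%:R :> R.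
  by rewrite -!natrM mul_bin_left.
have nzbS : 'C(#|T|, k.+1)%:R != 0 :> R by rewrite pnatr_eq0 -lt0n bin_gt0.
have nzb : 'C(#|T|, k)%:R != 0 :> R by rewrite pnatr_eq0 -lt0n bin_gt0 ltnW.
have -> : (#|T| - k)%:R = k.+1%:R * 'C(#|T|, k.+1)%:R / 'C(#|T|, k)%:R :> R.
  by rewrite binS mulfK.
by field; rewrite nzb nzbS addrC natr1 pnatr_eq0.
Qed.

End AverageByCard.

Arguments mean_card {R T} v k.

Theorem mainTheorem16 (R : realFieldType) (T : finType) (v : {set T} -> R)
  (hpos : (0 < #|T|)%N) (hv0 : v set0 = 0) (hvnn : forall S, 0 <= v S) :
  exp_random_size (fun S => \sum_(i in S) marginal v [set i] (S :\ i))
  = (harmonic R #|T|)^-1 * v [set: T].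
Proof.
rewrite /exp_random_size big_add1 /= -mean_card_setT.
have -> : mean_card v #|T| = mean_card v #|T| - mean_card v 0.
  by rewrite mean_card0 hv0 subr0.
rewrite -telescope_sumr // mulr_sumr.
apply: eq_big_nat => k /andP[_ ltkT].
by rewrite invfM -mulrA mulrCA mean_card_marginal.
Qed.
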